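(* Let $S\in\mathbb{R}^d$ be a random vector with density $f(\cdot\mid\beta^* )$ and let $\Omega\in\mathbb{R}^p$ be a random vector, independent of $S$, with density $g$ supported on $\mathbb{R}^p$. Let $D\in\mathbb{R}^{p\times d}$, $P\in\mathbb{R}^{p\times p}$ invertible and $q\in\mathbb{R}^p$ be fixed, and define the optimization variable $O\in\mathbb{R}^p$ through the inversion map $\Omega = DS+PO+q$, i.e. $O=P^{-1}(\Omega-DS-q)$. Then for every convex, compact set $\mathcal{R}\subset\mathbb{R}^d\times\mathbb{R}^p$, \[ \log\mathbb{P}\big((S,O)\in\mathcal{R}\mid\beta^*\big)\;\le\;-\inf_{(s,o)\in\mathcal{R}}\Big\{\Lambda_f^*(s\mid\beta^* )+\Lambda_g^*(Ds+Po+q)\Big\}. \]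
   Context: $\Lambda_f(t\mid\beta^* )=\log\mathbb{E}[\exp(t^TS)\mid\beta^*]$ is the log moment generating function (log-MGF) of $S$ and $\Lambda_f^*(s\mid\beta^* )=\sup_{t\in\mathbb{R}^d}\{t^Ts-\Lambda_f(t\mid\beta^* )\}$ its convex conjugate; similarly $\Lambda_g(t)=\log\mathbb{E}[\exp(t^T\Omega)]$ and $\Lambda_g^*(w)=\sup_{t\in\mathbb{R}^p}\{t^Tw-\Lambda_g(t)\}$. The probability is with respect to the joint law of $(S,O)$ induced by the independent laws of $S$ and $\Omega$. *)

From HB Require Import structures.
From mathcomp Require Import all_boot all_order all_algebra.
From mathcomp Require Import all_classical all_reals all_analysis.

Set Implicit Arguments.
Unset Strict Implicit.
Unset Printing Implicit Defensive.

Import Order.TTheory GRing.Theory Num.Theory.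
Import numFieldNormedType.Exports.

Local Open Scope classical_set_scope.
Local Open Scope ring_scope.

Section Defs.
Variable R : realType.

Definition cV_borel (n : nat) : set (set 'cV[R]_n) :=
  <<s [set A : set 'cV[R]_n | open A] >>.

(* Lebesgue integral on R^n, as the iterated one-dimensional Lebesgue
   integral (Tonelli): for n = 0 it is evaluation at the unique point. *)
Fixpoint iint (n : nat) : ('cV[R]_n -> \bar R) -> \bar R :=
  match n return ('cV[R]_n -> \bar R) -> \bar R with
  | 0 => fun F => F 0
  | n'.+1 => fun F =>
      (\int[@lebesgue_measure R]_x iint (fun y : 'cV[R]_n' => F (col_mx (x%:M) y)))%E
  end.

Definition has_density (d0 : measure_display) (T : measurableType d0)
    (Pr : probability T R) (n : nat) (X : T -> 'cV[R]_n) (f : 'cV[R]_n -> R) :=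
  [/\ forall B : set R, measurable B -> cV_borel (f @^-1` B),
      forall x, 0 <= f x &
      forall A, cV_borel A -> Pr (X @^-1` A) = iint (fun x => (\1_A x * f x)%:E)].

Definition random_vector (d0 : measure_display) (T : measurableType d0)
    (n : nat) (X : T -> 'cV[R]_n) :=
  forall A, cV_borel A -> measurable (X @^-1` A).

Definition indep_rv (d0 : measure_display) (T : measurableType d0)
    (Pr : probability T R) (n m : nat) (X : T -> 'cV[R]_n) (Y : T -> 'cV[R]_m) :=
  forall A B, cV_borel A -> cV_borel B ->
    Pr (X @^-1` A `&` Y @^-1` B) = (Pr (X @^-1` A) * Pr (Y @^-1` B))%E.

Definition logMGF (d0 : measure_display) (T : measurableType d0)
    (Pr : probability T R) (n : nat) (X : T -> 'cV[R]_n) (t : 'cV[R]_n) : \bar R :=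
  lne (\int[Pr]_w (expR ((t^T *m X w) 0 0))%:E)%E.

Definition logMGF_conj (d0 : measure_display) (T : measurableType d0)
    (Pr : probability T R) (n : nat) (X : T -> 'cV[R]_n) (s : 'cV[R]_n) : \bar R :=
  ereal_sup (range (fun t : 'cV[R]_n => ((t^T *m s) 0 0)%:E - logMGF Pr X t))%E.

Definition convex_pair (d p : nat) (A : set ('cV[R]_d * 'cV[R]_p)) :=
  forall x y (l : R), A x -> A y -> 0 <= l <= 1 ->
    A (l *: x.1 + (1 - l) *: y.1, l *: x.2 + (1 - l) *: y.2).

End Defs.

From HB Require Import structures.
From mathcomp Require Import all_boot all_order all_algebra.
From mathcomp Require Import all_classical all_reals all_analysis.
From mathcomp Require Import ring lra finmap measurable_realfun.

Set Implicit Arguments.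
Unset Strict Implicit.
Unset Printing Implicit Defensive.

Import Order.TTheory GRing.Theory Num.Def Num.Theory.
Import numFieldNormedType.Exports HBSimple HBNNSimple.

Local Open Scope classical_set_scope.
Local Open Scope ring_scope.

(* Fix a real c below the infimum of the rate function on the compact convex
   set Rset.  For every (s, o) in Rset the convex conjugates provide tilts t1, t2
   and levels r1 >= log E[exp (t1^T S)], r2 >= log E[exp (t2^T Omega)] with
   c < (t1^T s - r1) + (t2^T (D s + P o + q) - r2).  These bounds are affine
   in (s, o), so compactness and convexity of Rset yield a single convex
   combination of finitely many of them that exceeds c on all of Rset.  On the
   event {(S, O) in Rset} we have D S + P O + q = Omega, so by exp x >= 1 + x the
   exponential of that combination, minus c, majorizes the indicator of the
   event, and independence of S and Omega bounds its expectation by exp (-c). *)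

Lemma sqr_maxr0D_le (R : realDomainType) (z e : R) :
  maxr (z + e) 0 ^+ 2 <= maxr z 0 ^+ 2 + 2 * maxr z 0 * e + e ^+ 2.
Proof. by case: (lerP 0 z) => hz; case: (lerP 0 (z + e)) => hze; nra. Qed.

Lemma ge0_first_order_coef (R : realFieldType) (A B : R) :
  (forall l, 0 < l <= 1 -> 0 <= 2 * l * A + l ^+ 2 * B) -> 0 <= A.
Proof.
move=> quad_ge0; rewrite leNgt; apply/negP => A_lt0.
have BA_gt0 : 0 < `|B| - A by rewrite subr_gt0 (lt_le_trans A_lt0).
pose l := - A / (`|B| - A).
have l_gt0 : 0 < l by rewrite divr_gt0 // oppr_gt0.
have l_le1 : l <= 1 by rewrite ler_pdivrMr // mul1r; have := normr_ge0 B; lra.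
have lB_lt : l * B < - A.
  apply: (le_lt_trans (ler_wpM2l (ltW l_gt0) (ler_norm B))).
  rewrite mulrAC ltr_pdivrMr //; nra.
have := quad_ge0 l; rewrite l_gt0 l_le1 => /(_ isT); nra.
Qed.

Section convex_cover.
Variables (R : realType) (X : ptopologicalType) (I : choiceType).
Variables (seg : R -> X -> X -> X) (C : set X) (psi : I -> X -> R) (c : R).
Hypothesis convexC : forall x y l, C x -> C y -> 0 <= l <= 1 -> C (seg l x y).
Hypothesis psi_affine :
  forall i x y l, psi i (seg l x y) = l * psi i x + (1 - l) * psi i y.
Hypothesis psi_cont : forall i, continuous (psi i).

Let excess i x := maxr (psi i x - c) 0.
Let penalty (s : seq I) x := \sum_(i <- s) excess i x ^+ 2.

Let excess_ge0 i x : 0 <= excess i x.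
Proof. by rewrite /excess le_max lexx orbT. Qed.

Let continuous_penalty s : continuous (penalty s).
Proof.
have excess_cont i : continuous (excess i).
  move=> x; apply: (continuous_max (f := fun x => psi i x - c) (g := fun=> 0)).
    by apply: continuousB; [exact: psi_cont | exact: cst_continuous].
  exact: cst_continuous.
apply: (continuous_big (op := +%R) (x0 := 0) (P := xpredT) add_continuous).
by move=> i _ x; exact: (continuousM (excess_cont i x) (excess_cont i x)).
Qed.

Let penalty_min_variation {s xs x} : C xs -> C x ->
  (forall y, C y -> penalty s xs <= penalty s y) ->
  0 <= \sum_(i <- s) excess i xs * (psi i x - psi i xs).
Proof.
move=> Cxs Cx xs_min.
apply: (@ge0_first_order_coef _ _ (\sum_(i <- s) (psi i x - psi i xs) ^+ 2)).
move=> l /andP[l_gt0 l_le1].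
have /xs_min : C (seg l x xs) by apply: convexC; rewrite ?(ltW l_gt0).
have penalty_seg : penalty s (seg l x xs) <= \sum_(i <- s)
    (excess i xs ^+ 2 + 2 * excess i xs * (l * (psi i x - psi i xs))
     + (l * (psi i x - psi i xs)) ^+ 2).
  apply: ler_sum => i _; rewrite /excess psi_affine.
  have -> : l * psi i x + (1 - l) * psi i xs - c =
    (psi i xs - c) + l * (psi i x - psi i xs) by ring.
  exact: sqr_maxr0D_le.
have sum_lin : \sum_(i <- s) 2 * excess i xs * (l * (psi i x - psi i xs)) =
    2 * l * \sum_(i <- s) excess i xs * (psi i x - psi i xs).
  by rewrite mulr_sumr; apply: eq_bigr => i _; ring.
have sum_sq : \sum_(i <- s) (l * (psi i x - psi i xs)) ^+ 2 =
    l ^+ 2 * \sum_(i <- s) (psi i x - psi i xs) ^+ 2.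
  by rewrite mulr_sumr; apply: eq_bigr => i _; ring.
move=> /le_trans /(_ penalty_seg).
by rewrite !big_split /= -!addrA lerDl sum_lin sum_sq.
Qed.

(* The weights are the excesses [max (psi_i - c) 0] at a minimiser of the
   penalty [sum_i excess_i ^ 2] on [C], normalised to sum to 1; first-order
   optimality of the minimiser along segments gives the bound. *)
Lemma affine_cover_convex_combination (DI : set I) :
  compact C -> C !=set0 -> (forall x, C x -> exists2 i, DI i & c < psi i x) ->
  exists (F : seq I) (lam : I -> R), [/\ forall i, 0 <= lam i, {in F, forall i, DI i},
    \sum_(i <- F) lam i = 1 & forall x, C x -> c <= \sum_(i <- F) lam i * psi i x].
Proof.
move=> cC C0 cover.
have [F FD CF] : finite_subset_cover DI (fun i => [set x | c < psi i x]) C.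
  move: cC; rewrite compact_cover; apply.
    by move=> i _; apply: (@open_comp _ _ (psi i) [set y | c < y]) => [x _|];
      [exact: psi_cont | exact: open_gt].
  by move=> x /cover[i Di ci]; exists i.
have [xs /set_mem Cxs xs_min] : exists2 xs, xs \in C &
    forall y, y \in C -> penalty F xs <= penalty F y.
  by apply: compact_EVT_min => //; exact: continuous_subspaceT.
pose L := \sum_(i <- F) excess i xs.
have L_gt0 : 0 < L.
  have [i Fi ci] := CF xs Cxs.
  rewrite /L (bigD1_seq i) //= ?fset_uniq //.
  apply: (@lt_le_trans _ _ (excess i xs)); first by rewrite lt_max subr_gt0 ci.
  by rewrite lerDl sumr_ge0.
exists F, (fun i => excess i xs / L); split.
- by move=> i; rewrite divr_ge0 // ltW.
- by move=> i /FD; rewrite in_setE.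
- by rewrite -mulr_suml divff // gt_eqF.
move=> x Cx.
under eq_bigr do rewrite mulrAC.
rewrite -mulr_suml ler_pdivlMr //.
have := penalty_min_variation Cxs Cx (fun y Cy => xs_min y (mem_set Cy)).
have cL : c * L <= \sum_(i <- F) excess i xs * psi i xs.
  rewrite /L mulr_sumr; apply: ler_sum => i _.
  by rewrite /excess; case: (lerP 0 (psi i xs - c)) => h; nra.
have -> : \sum_(i <- F) excess i xs * psi i x =
    \sum_(i <- F) excess i xs * (psi i x - psi i xs) +
    \sum_(i <- F) excess i xs * psi i xs.
  by rewrite -big_split; apply: eq_bigr => i _ /=; ring.
lra.
Qed.

End convex_cover.

Definition borel_cV (R : realType) n :=
  g_sigma_algebraType [set A : set 'cV[R]_n | open A].

Definition dotcV (R : pzRingType) n (a x : 'cV[R]_n) : R := (a^T *m x) 0 0.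

Lemma measurable_coord (R : realType) n (i : 'I_n) :
  measurable_fun setT (fun x : borel_cV R n => x i 0).
Proof.
apply: (@measurability _ _ _ _ setT _ _ (RGenOInfty.measurableE R)) => _ [_ [c ->] <-].
rewrite setTI; apply: sub_sigma_algebra => /=.
apply: (@open_comp _ _ (fun x : 'cV[R]_n => x i 0) `]c, +oo[%classic).
  by move=> x _; exact: coord_continuous.
have -> : `]c, +oo[%classic = [set y : R | c < y].
  by apply: funext => y; rewrite /= in_itv /= andbT.
exact: open_gt.
Qed.

Section coordwise_measurable.
Variables (R : realType) (d0 : measure_display) (T : measurableType d0).

Definition coordwise_measurable n (X : T -> 'cV[R]_n) :=
  forall i, measurable_fun setT (fun w => X w i 0).

Lemma random_vector_measurable n (X : T -> 'cV[R]_n) : random_vector X ->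
  measurable_fun setT (X : T -> borel_cV R n).
Proof. by move=> rvX _ A mA; rewrite setTI; exact: rvX. Qed.

Lemma random_vector_coordwise n (X : T -> 'cV[R]_n) : random_vector X ->
  coordwise_measurable X.
Proof.
move=> rvX i.
apply: (measurableT_comp (f := fun x : borel_cV R n => x i 0)
                         (g := X : T -> borel_cV R n)).
  exact: measurable_coord.
exact: random_vector_measurable.
Qed.

Lemma coordwise_measurableB n (X Y : T -> 'cV[R]_n) :
  coordwise_measurable X -> coordwise_measurable Y ->
  coordwise_measurable (fun w => X w - Y w).
Proof.
by move=> mX mY i; under eq_fun do rewrite !mxE; exact: measurable_funB.
Qed.

Lemma coordwise_measurable_cst n (c : 'cV[R]_n) :
  coordwise_measurable (fun=> c).
Proof. by move=> i; exact: measurable_cst. Qed.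

Lemma coordwise_measurable_mulmx m n (M : 'M[R]_(m, n)) (X : T -> 'cV[R]_n) :
  coordwise_measurable X -> coordwise_measurable (fun w => M *m X w).
Proof.
move=> mX i; under eq_fun do rewrite mxE.
by apply: measurable_sum => j; apply: measurable_funM => //; exact: measurable_cst.
Qed.

Lemma measurable_dotcV n (a : 'cV[R]_n) (X : T -> 'cV[R]_n) :
  coordwise_measurable X -> measurable_fun setT (fun w => dotcV a (X w)).
Proof. by move=> mX; exact: (coordwise_measurable_mulmx a^T mX 0). Qed.

End coordwise_measurable.

Lemma ball_cV2P (R : realType) n m (y x : 'cV[R]_n * 'cV[R]_m) r :
  ball y r x <-> [/\ 0 < r, forall i, `|y.1 i 0 - x.1 i 0| < r
                        & forall i, `|y.2 i 0 - x.2 i 0| < r].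
Proof.
split => [[[r_gt0 y1x1] [_ y2x2]]|[r_gt0 y1x1 y2x2]].
  by split => // i; [exact: (y1x1 i 0) | exact: (y2x2 i 0)].
by split; split => // i j; rewrite (ord1 j); [exact: y1x1 | exact: y2x2].
Qed.

(* [compact_cover] is only available on pointed spaces. *)
HB.instance Definition _ (R : realType) n m :=
  Pointed.on ('cV[R]_n * 'cV[R]_m)%type.

Section compact_event.
Variables (R : realType) (d0 : measure_display) (T : measurableType d0).

Lemma measurable_dist_lt (f : T -> R) (c r : R) : measurable_fun setT f ->
  measurable [set w | `|c - f w| < r].
Proof.
move=> mf; rewrite -[X in measurable X]setTI.
have : measurable_fun setT (fun w => `|c - f w|).
  apply: (measurableT_comp (f := @normr _ R)); first exact: normr_measurable.
  by apply: measurable_funB => //; exact: measurable_cst.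
by move=> /(_ measurableT `]-oo, r[%classic (measurable_itv _)); rewrite /= set_itvNyo.
Qed.

Variables (n m : nat) (Z1 : T -> 'cV[R]_n) (Z2 : T -> 'cV[R]_m).
Hypotheses (mZ1 : coordwise_measurable Z1) (mZ2 : coordwise_measurable Z2).

Lemma measurable_ball_preimage y r : measurable [set w | ball y r (Z1 w, Z2 w)].
Proof.
have [r_gt0|r_le0] := ltP 0 r; last first.
  suff -> : [set w | ball y r (Z1 w, Z2 w)] = set0 by [].
  by apply/seteqP; split => w //= /ball_cV2P[]; rewrite ltNge r_le0.
have -> : [set w | ball y r (Z1 w, Z2 w)] =
    \bigcap_(i in [set: 'I_n]) [set w | `|y.1 i 0 - Z1 w i 0| < r] `&`
    \bigcap_(i in [set: 'I_m]) [set w | `|y.2 i 0 - Z2 w i 0| < r].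
  apply/seteqP; split => w /=.
    by move=> /ball_cV2P[_ y1Z1 y2Z2]; split => i _; [exact: y1Z1 | exact: y2Z2].
  by move=> [y1Z1 y2Z2]; apply/ball_cV2P; split => // i; [exact: y1Z1 | exact: y2Z2].
by apply: measurableI; apply: fin_bigcap_measurable => // i _;
  apply: measurable_dist_lt; [exact: mZ1 | exact: mZ2].
Qed.

(* Being closed, a compact set is the intersection over [k] of finite unions
   of balls of radius [1 / k.+1] centred in it. *)
Lemma measurable_compact_preimage (K : set ('cV[R]_n * 'cV[R]_m)) :
  compact K -> measurable [set w | K (Z1 w, Z2 w)].
Proof.
move=> cK; pose r k : R := k.+1%:R^-1.
have /choice[F FK] : forall k, exists F : {fset 'cV[R]_n * 'cV[R]_m},
    {subset F <= K} /\ K `<=` cover [set` F] (fun y => ball y (r k)).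
  move=> k; move: cK; rewrite compact_cover => /(_ _ K (fun y => ball y (r k))).
  case=> [y _|y Ky|F FK KF]; first exact: ball_open.
    by exists y => //; apply: ballxx; rewrite invr_gt0.
  by exists F.
have -> : [set w | K (Z1 w, Z2 w)] =
    \bigcap_k \bigcup_(y in [set` F k]) [set w | ball y (r k) (Z1 w, Z2 w)].
  apply/seteqP; split => w /=.
    by move=> KZ k _; have [_ /(_ _ KZ)[y Fy yZ]] := FK k; exists y.
  move=> near_K.
  have clK : closed K by apply: compact_closed => //; exact: norm_hausdorff.
  apply: clK => B /nbhs_ballP[e /= e_gt0 eB].
  have [k _ /(_ k (leqnn k)) rk_lt] := near_infty_natSinv_lt (PosNum e_gt0).
  have [y Fy yZ] := near_K k I; exists y; split; first exact/set_mem/(FK k).1.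
  by apply/eB/(le_ball (ltW rk_lt)); exact: ball_sym.
apply: bigcapT_measurable => k; apply: fin_bigcup_measurable => // y _.
exact: measurable_ball_preimage.
Qed.

End compact_event.

Lemma integral_indic_sum d (T : measurableType d) (R : realType)
    (mu : {finite_measure set T -> \bar R}) (K : Type) (s : seq K)
    (c : K -> R) (A : K -> set T) : (forall k, measurable (A k)) ->
  (\int[mu]_w (\sum_(k <- s) c k * \1_(A k) w)%:E =
   (\sum_(k <- s) c k * fine (mu (A k)))%:E)%E.
Proof.
move=> mA; under eq_integral do rewrite -sumEFin.
under eq_integral do under eq_bigr do rewrite EFinM.
rewrite integral_sum // -?sumEFin => [|k]; last exact/integrableZl/integrable_indic/mA.
apply: eq_bigr => k _; rewrite EFinM fineK ?fin_num_measure //.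
by rewrite integralZl ?integral_indic ?setIT //; exact/integrable_indic/mA.
Qed.

Lemma sfun_indic_sum d (U : measurableType d) (R : realType) (u : {sfun U >-> R}) x :
  u x = \sum_(y <- fset_set (range u)) y * \1_(u @^-1` [set y]) x.
Proof. by rewrite fimfunE fsbig_finite. Qed.

Lemma nnsfun_approximation d (U : measurableType d) (R : realType) (u : U -> R) :
  (forall x, 0 <= u x) -> measurable_fun setT u ->
  exists a : {nnsfun U >-> R}^nat,
    [/\ forall x, {homo a ^~ x : n m / (n <= m)%N >-> n <= m},
        forall n x, a n x <= u x & forall x, a n x @[n --> \oo] --> u x].
Proof.
move=> u0 mu.
have mEu : measurable_fun setT (EFin \o u) by exact/measurable_EFinP.
have Eu0 x : setT x -> (0 <= (EFin \o u) x)%E by move=> _; rewrite lee_fin.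
exists (nnsfun_approx measurableT mEu); split.
- by move=> x n m nm; exact/lefP/nd_nnsfun_approx.
- by move=> n x; rewrite -lee_fin nnsfun_approxE; exact: le_approx.
- move=> x; under eq_fun do rewrite nnsfun_approxE.
  exact: (cvg_approx Eu0 I (ltry _)).
Qed.

Section independent_product.
Context {R : realType} {d0 d1 d2 : measure_display} {T : measurableType d0}
  {T1 : measurableType d1} {T2 : measurableType d2}.
Variables (Pr : probability T R) (X : T -> T1) (Y : T -> T2).
Hypotheses (mX : measurable_fun setT X) (mY : measurable_fun setT Y).
Hypothesis indepXY : forall A B, measurable A -> measurable B ->
  Pr (X @^-1` A `&` Y @^-1` B) = (Pr (X @^-1` A) * Pr (Y @^-1` B))%E.

Let measurable_preimageX A : measurable A -> measurable (X @^-1` A).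
Proof. by move=> mA; rewrite -[X @^-1` A]setTI; exact: mX. Qed.

Let measurable_preimageY A : measurable A -> measurable (Y @^-1` A).
Proof. by move=> mA; rewrite -[Y @^-1` A]setTI; exact: mY. Qed.

Lemma integral_sfun_indep_mul (u : {sfun T1 >-> R}) (v : {sfun T2 >-> R}) :
  (\int[Pr]_w (u (X w) * v (Y w))%:E =
   \int[Pr]_w (u (X w))%:E * \int[Pr]_w (v (Y w))%:E)%E.
Proof.
pose Au y := X @^-1` (u @^-1` [set y]); pose Bv z := Y @^-1` (v @^-1` [set z]).
have mu1 y : measurable (u @^-1` [set y]) by exact: measurable_funPTI.
have mv1 z : measurable (v @^-1` [set z]) by exact: measurable_funPTI.
have mAu y : measurable (Au y) by exact/measurable_preimageX/mu1.
have mBv z : measurable (Bv z) by exact/measurable_preimageY/mv1.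
pose su := fset_set (range u); pose sv := fset_set (range v).
have uX w : u (X w) = \sum_(y <- su) y * \1_(Au y) w by exact: sfun_indic_sum.
have vY w : v (Y w) = \sum_(z <- sv) z * \1_(Bv z) w by exact: sfun_indic_sum.
have uXvY w : u (X w) * v (Y w) = \sum_(yz <- [seq (y, z) | y <- su, z <- sv])
    yz.1 * yz.2 * \1_(Au yz.1 `&` Bv yz.2) w.
  rewrite uX vY big_allpairs big_distrlr /=; apply: eq_bigr => y _.
  by apply: eq_bigr => z _; rewrite indicI /=; ring.
under eq_integral do rewrite uXvY.
under [in RHS]eq_integral do rewrite uX.
under [X in (_ = _ * X)%E]eq_integral do rewrite vY.
rewrite !integral_indic_sum // -?EFinM; last by move=> yz; exact: measurableI.
rewrite big_allpairs big_distrlr /=; congr _%:E; apply: eq_bigr => y _.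
apply: eq_bigr => z _; rewrite /Au /Bv indepXY // fineM ?fin_num_measure //.
- by ring.
- exact: mAu.
- exact: mBv.
Qed.

Lemma ge0_integral_indep_mul_le (u : T1 -> R) (v : T2 -> R) :
  (forall x, 0 <= u x) -> (forall y, 0 <= v y) ->
  measurable_fun setT u -> measurable_fun setT v ->
  (\int[Pr]_w (u (X w) * v (Y w))%:E <=
   \int[Pr]_w (u (X w))%:E * \int[Pr]_w (v (Y w))%:E)%E.
Proof.
move=> u0 v0 mu mv.
have [a [nd_a au cvg_a]] := nnsfun_approximation u0 mu.
have [b [nd_b bv cvg_b]] := nnsfun_approximation v0 mv.
pose g n w := (a n (X w) * b n (Y w))%:E.
have mg n : measurable_fun setT (g n).
  by apply/measurable_EFinP/measurable_funM; exact: measurableT_comp.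
have g0 n w : setT w -> (0 <= g n w)%E by move=> _; rewrite lee_fin mulr_ge0.
have nd_g w : setT w -> {homo g ^~ w : n m / (n <= m)%N >-> (n <= m)%E}.
  by move=> _ n m nm; rewrite lee_fin ler_pM ?nd_a ?nd_b.
have int_g_cvg := @cvg_monotone_convergence _ _ _ Pr _ measurableT _ mg g0 nd_g.
have -> : (\int[Pr]_w (u (X w) * v (Y w))%:E = \int[Pr]_w limn (g ^~ w))%E.
  apply: eq_integral => w _; apply/esym/cvg_lim => //.
  by apply: cvg_EFin; [exact: nearW | exact: cvgM].
rewrite -(cvg_lim _ int_g_cvg) //; apply: lime_le.
  by apply/cvg_ex; exists (\int[Pr]_w limn (g ^~ w))%E.
apply: nearW => n; rewrite /g integral_sfun_indep_mul.
apply: lee_pmul; try by apply: integral_ge0 => w _; rewrite lee_fin.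
- apply: ge0_le_integral => // [w _| | |w _]; rewrite ?lee_fin ?au //;
    exact/measurable_EFinP/measurableT_comp.
- apply: ge0_le_integral => // [w _| | |w _]; rewrite ?lee_fin ?bv //;
    exact/measurable_EFinP/measurableT_comp.
Qed.

End independent_product.

Section ereal_bounds.
Variable R : realType.
Local Open Scope ereal_scope.

Lemma lte_EFinB_ub (a z : R) (L : \bar R) : a%:E < z%:E - L ->
  exists r : R, L <= r%:E /\ (a < z - r)%R.
Proof.
case: L => [l| |] /=.
- by rewrite -EFinD lte_fin => ?; exists l.
- by rewrite addeNy ltNge leNye.
- by move=> _; exists (z - a - 1)%R; split; [exact: leNye | lra].
Qed.

Lemma lte_addeP_split (u v : \bar R) (c : R) : 0 <= u -> 0 <= v ->
  c%:E < u + v -> exists a : R, a%:E < u /\ (c - a)%:E < v.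
Proof.
case: u => [u| |] //; case: v => [v| |] //=.
- rewrite !lee_fin -EFinD lte_fin => u0 v0 cuv.
  by exists (u - (u + v - c) / 2)%R; rewrite !lte_fin; split; lra.
- by move=> u0 _ _; exists (u - 1)%R; split; [rewrite lte_fin; lra | exact: ltry].
- move=> _ v0 _; exists (c + 1)%R; split; first exact: ltry.
  by apply: (@lt_le_trans _ _ 0%E) => //; rewrite lte_fin; lra.
- by move=> _ _ _; exists 0%R; split; exact: ltry.
Qed.

Lemma lee_oppe_ltP (x m : \bar R) :
  (forall c : R, c%:E < m -> x <= (- c)%:E) -> x <= - m.
Proof.
case: m => [r| |] xc /=.
- apply/lee_addgt0Pr => e e_gt0.
  have /xc : (r - e)%:E < r%:E by rewrite lte_fin gtrBl.
  by rewrite -EFinD opprB addrC.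
- case: x xc => [l| |] xc //.
  + by have := xc (- l + 1)%R (ltry _); rewrite lee_fin => ?; exfalso; lra.
  + by have := xc 0%R (ltry _).
- exact: leey.
Qed.

Lemma lne_le_expR (x : \bar R) (r : R) :
  0 <= x -> x <= (expR r)%:E -> lne x <= r%:E.
Proof.
move=> x_ge0 x_le.
have <- : lne (expR r)%:E = r%:E by rewrite lne_EFin ?expR_gt0 // expRK.
by rewrite lee_lne // ?in_itv /= ?x_ge0 ?leey ?lee_fin ?expR_ge0.
Qed.

End ereal_bounds.

Section moment_generating_function.
Variables (R : realType) (d0 : measure_display) (T : measurableType d0).
Variable Pr : probability T R.

Definition mgf n (X : T -> 'cV[R]_n) (t : 'cV[R]_n) : \bar R :=
  (\int[Pr]_w (expR (dotcV t (X w)))%:E)%E.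

Lemma logMGF0 n (X : T -> 'cV[R]_n) : logMGF Pr X 0 = 0%E.
Proof.
rewrite /logMGF; under eq_integral do rewrite trmx0 mul0mx mxE expR0.
rewrite integral_cst //.
have -> : (1 * Pr [set: T] = 1)%E by rewrite mul1e; exact: probability_setT.
exact: lne1.
Qed.

Lemma logMGF_conj_ge0 n (X : T -> 'cV[R]_n) s : (0 <= logMGF_conj Pr X s)%E.
Proof.
apply: (@le_trans _ _ ((((0 : 'cV[R]_n)^T *m s) 0 0)%:E - logMGF Pr X 0)%E).
  by rewrite logMGF0 trmx0 mul0mx mxE sube0.
by apply: ereal_sup_ubound; exists 0.
Qed.

Definition tilt n (th : 'cV[R]_n * R) (x : 'cV[R]_n) : R := dotcV th.1 x - th.2.

Definition mgf_bounded n (X : T -> 'cV[R]_n) (th : 'cV[R]_n * R) :=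
  (mgf X th.1 <= (expR th.2)%:E)%E.

Lemma lt_logMGF_conj n (X : T -> 'cV[R]_n) s (a : R) :
  (a%:E < logMGF_conj Pr X s)%E -> exists2 th, mgf_bounded X th & a < tilt th s.
Proof.
move=> /ereal_sup_gt[_ [t _ <-]] /lte_EFinB_ub[r [Lr ar]].
exists (t, r) => //; rewrite /mgf_bounded /=.
have mgf_ge0 : (0 <= mgf X t)%E.
  by apply: integral_ge0 => w _; rewrite lee_fin expR_ge0.
rewrite -(lneK (x := mgf X t)) ?in_itv /= ?mgf_ge0 ?leey //.
by rewrite -[(expR r)%:E]/(expeR r%:E) lee_expeR.
Qed.

Lemma lt_logMGF_conjD n m (X : T -> 'cV[R]_n) (Y : T -> 'cV[R]_m) s v (c : R) :
  (c%:E < logMGF_conj Pr X s + logMGF_conj Pr Y v)%E ->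
  exists th : ('cV[R]_n * R) * ('cV[R]_m * R),
    [/\ mgf_bounded X th.1, mgf_bounded Y th.2 & c < tilt th.1 s + tilt th.2 v].
Proof.
move=> /(lte_addeP_split (logMGF_conj_ge0 _ _) (logMGF_conj_ge0 _ _))[a [aX caY]].
have [th1 bX a_lt] := lt_logMGF_conj aX; have [th2 bY ca_lt] := lt_logMGF_conj caY.
by exists (th1, th2); split => //=; lra.
Qed.

End moment_generating_function.

Section affine_pair.
Variables (R : realType) (n m : nat).

Definition affine_pair (U : 'rV[R]_n) (V : 'rV[R]_m) (k : R)
    (x : 'cV[R]_n * 'cV[R]_m) : R :=
  (U *m x.1) 0 0 + (V *m x.2) 0 0 + k.

Lemma affine_pair_segment U V k x y l :
  affine_pair U V k (l *: x.1 + (1 - l) *: y.1, l *: x.2 + (1 - l) *: y.2) =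
  l * affine_pair U V k x + (1 - l) * affine_pair U V k y.
Proof.
have entryD (A B : 'M[R]_1) : (A + B) 0 0 = A 0 0 + B 0 0 by rewrite mxE.
have entryZ a (A : 'M[R]_1) : (a *: A) 0 0 = a * A 0 0 by rewrite mxE.
by rewrite /affine_pair /= !mulmxDr -!scalemxAr !entryD !entryZ; ring.
Qed.

Lemma continuous_affine_pair U V k : continuous (affine_pair U V k).
Proof.
have continuous_entry l (W : 'rV[R]_l) (f : 'cV[R]_n * 'cV[R]_m -> 'cV[R]_l) :
    (forall j, continuous (fun x => f x j 0)) -> continuous (fun x => (W *m f x) 0 0).
  move=> cf; under eq_fun do rewrite mxE.
  apply: (continuous_big (op := +%R) (x0 := 0) (P := xpredT) add_continuous) => j _ x.
  by apply: continuousM; [exact: cst_continuous | exact: cf].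
have -> : affine_pair U V k =
    (fun x => (U *m x.1) 0 0) + (fun x => (V *m x.2) 0 0) + cst k by [].
move=> x; apply: continuousD; last exact: cst_continuous.
apply: continuousD; apply: continuous_entry => j {}x.
  by apply: (continuous_comp (f := fst) (g := fun M : 'cV[R]_n => M j 0));
    [exact: cvg_fst | exact: coord_continuous].
by apply: (continuous_comp (f := snd) (g := fun M : 'cV[R]_m => M j 0));
  [exact: cvg_snd | exact: coord_continuous].
Qed.

End affine_pair.

Section tilt_pair.
Variables (R : realType) (d p : nat).
Variables (D : 'M[R]_(p, d)) (P : 'M[R]_p) (q : 'cV[R]_p).

Definition tilt_pair (th : ('cV[R]_d * R) * ('cV[R]_p * R))
    (x : 'cV[R]_d * 'cV[R]_p) : R :=
  tilt th.1 x.1 + tilt th.2 (D *m x.1 + P *m x.2 + q).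

Lemma tilt_pairE th : tilt_pair th =
  affine_pair (th.1.1^T + th.2.1^T *m D) (th.2.1^T *m P)
    (dotcV th.2.1 q - th.1.2 - th.2.2).
Proof.
apply: funext => x; rewrite /tilt_pair /affine_pair /tilt /dotcV.
by rewrite mulmxDl !mulmxDr !mulmxA !mxE; ring.
Qed.

Lemma tilt_pair_segment th x y l :
  tilt_pair th (l *: x.1 + (1 - l) *: y.1, l *: x.2 + (1 - l) *: y.2) =
  l * tilt_pair th x + (1 - l) * tilt_pair th y.
Proof. by rewrite tilt_pairE affine_pair_segment. Qed.

Lemma continuous_tilt_pair th : continuous (tilt_pair th).
Proof. by rewrite tilt_pairE; exact: continuous_affine_pair. Qed.

End tilt_pair.

Lemma expR_convex_comb_ge1 (R : realType) (I : Type) (s : seq I) (lam z : I -> R) c :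
  (forall i, 0 <= lam i) -> \sum_(i <- s) lam i = 1 ->
  c <= \sum_(i <- s) lam i * z i -> 1 <= \sum_(i <- s) lam i * expR (z i - c).
Proof.
move=> lam_ge0 lam_sum1 c_le.
apply: (@le_trans _ _ (\sum_(i <- s) lam i * (1 + (z i - c)))).
  have -> : \sum_(i <- s) lam i * (1 + (z i - c)) =
      \sum_(i <- s) lam i + \sum_(i <- s) lam i * z i - c * \sum_(i <- s) lam i.
    by rewrite mulr_sumr -big_split -sumrB /=; apply: eq_bigr => i _; ring.
  by rewrite lam_sum1; lra.
by apply: ler_sum => i _; apply: ler_wpM2l => //; exact: expR_ge1Dx.
Qed.

Lemma measure_le_integral d (T : measurableType d) (R : realType)
    (mu : {measure set T -> \bar R}) (E : set T) (h : T -> R) :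
  measurable E -> measurable_fun setT h -> (forall w, 0 <= h w) ->
  (forall w, E w -> 1 <= h w) -> (mu E <= \int[mu]_w (h w)%:E)%E.
Proof.
move=> mE mh h_ge0 h_ge1; rewrite -(setIT E) -(integral_indic mu measurableT mE).
apply: ge0_le_integral => //; first exact/measurable_EFinP/measurable_indic.
  exact/measurable_EFinP.
move=> w _; rewrite lee_fin indicE.
by case: (boolP (w \in E)) => [/set_mem/h_ge1|].
Qed.

Section chernoff.
Variables (R : realType) (d0 : measure_display) (T : measurableType d0).
Variables (Pr : probability T R) (d p : nat).
Variables (S : T -> 'cV[R]_d) (Om : T -> 'cV[R]_p).
Hypotheses (rvS : random_vector S) (rvOm : random_vector Om).
Hypothesis indepSOm : indep_rv Pr S Om.

Let measurable_expR_tilt n (th : 'cV[R]_n * R) :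
  measurable_fun setT (fun x : borel_cV R n => expR (tilt th x)).
Proof.
apply: measurableT_comp; first exact: measurable_expR.
apply: (measurable_funB (f := fun x : borel_cV R n => dotcV th.1 x) (g := fun=> th.2)).
  exact: (@measurable_dotcV R _ (borel_cV R n) n th.1 (fun x => x)
                            (@measurable_coord R n)).
exact: measurable_cst.
Qed.

Lemma measurable_tilt n (X : T -> 'cV[R]_n) th : random_vector X ->
  measurable_fun setT (fun w => tilt th (X w)).
Proof.
move=> rvX; apply: (measurable_funB (f := fun w => dotcV th.1 (X w)) (g := fun=> th.2)).
  exact/measurable_dotcV/random_vector_coordwise.
exact: measurable_cst.
Qed.

Lemma integral_expR_tilt_le1 n (X : T -> 'cV[R]_n) th :
  random_vector X -> mgf_bounded Pr X th ->
  (\int[Pr]_w (expR (tilt th (X w)))%:E <= 1)%E.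
Proof.
rewrite /mgf_bounded /mgf => rvX mgf_le.
under eq_integral do rewrite /tilt expRD mulrC EFinM.
rewrite ge0_integralZl //; last first.
  apply/measurable_EFinP/measurableT_comp; first exact: measurable_expR.
  exact/measurable_dotcV/random_vector_coordwise.
apply: le_trans (lee_wpmul2l _ mgf_le) _; first by rewrite lee_fin expR_ge0.
by rewrite -EFinM -expRD addNr expR0.
Qed.

Lemma integral_expR_tiltD_le1 th1 th2 : mgf_bounded Pr S th1 -> mgf_bounded Pr Om th2 ->
  (\int[Pr]_w (expR (tilt th1 (S w) + tilt th2 (Om w)))%:E <= 1)%E.
Proof.
move=> bS bOm; under eq_integral do rewrite expRD.
have := @ge0_integral_indep_mul_le R _ _ _ T (borel_cV R d) (borel_cV R p) Pr S Om
  (random_vector_measurable rvS) (random_vector_measurable rvOm) indepSOm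
  (fun x => expR (tilt th1 x)) (fun y => expR (tilt th2 y))
  (fun=> expR_ge0 _) (fun=> expR_ge0 _)
  (measurable_expR_tilt th1) (measurable_expR_tilt th2).
move=> /le_trans; apply; rewrite -[1%E]mule1.
by apply: lee_pmul; (apply: integral_ge0 => w _; rewrite lee_fin expR_ge0) ||
  exact: integral_expR_tilt_le1.
Qed.

Lemma chernoff_mixture (E : set T) (F : seq (('cV[R]_d * R) * ('cV[R]_p * R)))
    (lam : ('cV[R]_d * R) * ('cV[R]_p * R) -> R) (c : R) :
  measurable E -> (forall th, 0 <= lam th) -> \sum_(th <- F) lam th = 1 ->
  {in F, forall th, mgf_bounded Pr S th.1 /\ mgf_bounded Pr Om th.2} ->
  (forall w, E w ->
     c <= \sum_(th <- F) lam th * (tilt th.1 (S w) + tilt th.2 (Om w))) ->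
  (Pr E <= (expR (- c))%:E)%E.
Proof.
move=> mE lam_ge0 lam_sum1 bounded c_le.
pose z th w := tilt th.1 (S w) + tilt th.2 (Om w).
have mz th : measurable_fun setT (z th).
  by apply: measurable_funD; apply: measurable_tilt.
have mexp th : measurable_fun setT (fun w => lam th * expR (z th w - c)).
  apply: measurable_funM; first exact: measurable_cst.
  apply: measurableT_comp; first exact: measurable_expR.
  by apply: measurable_funB => //; exact: measurable_cst.
pose h w := \sum_(th <- F) lam th * expR (z th w - c).
apply: (le_trans (measure_le_integral (h := h) _ mE _ _ _)).
- by apply: measurable_sum => th; exact: mexp.
- by move=> w; apply: sumr_ge0 => th _; rewrite mulr_ge0 ?expR_ge0.
- by move=> w /c_le; exact: expR_convex_comb_ge1.
under eq_integral do rewrite -sumEFin.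
rewrite ge0_integral_sum //; first last.
- by move=> th w _; rewrite lee_fin mulr_ge0 ?expR_ge0.
- by move=> th; exact/measurable_EFinP.
rewrite -[expR (- c)]mul1r -lam_sum1 mulr_suml -sumEFin.
rewrite big_seq [X in (_ <= X)%E]big_seq; apply: lee_sum => th /bounded[bS bOm].
under eq_integral do rewrite expRD mulrCA mulrC EFinM.
have lam_exp_ge0 : (0 <= (lam th * expR (- c))%:E)%E.
  by rewrite lee_fin mulr_ge0 ?expR_ge0.
rewrite ge0_integralZl //.
  rewrite -[X in (_ <= X)%E]mule1; apply: lee_wpmul2l => //.
  exact: integral_expR_tiltD_le1.
by apply/measurable_EFinP/measurableT_comp; [exact: measurable_expR | exact: mz].
Qed.

End chernoff.

Theorem theorem1 (R : realType) (d p : nat)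
    (d0 : measure_display) (T : measurableType d0) (Pr : probability T R)
    (S : T -> 'cV[R]_d) (Om : T -> 'cV[R]_p)
    (f : 'cV[R]_d -> R) (g : 'cV[R]_p -> R)
    (D : 'M[R]_(p, d)) (P : 'M[R]_p) (q : 'cV[R]_p)
    (Rset : set ('cV[R]_d * 'cV[R]_p)) :
  random_vector S -> random_vector Om ->
  has_density Pr S f -> has_density Pr Om g ->
  closure [set w | g w != 0] = setT ->
  indep_rv Pr S Om ->
  P \in unitmx ->
  convex_pair Rset -> compact Rset ->
  (lne (Pr [set w | Rset (S w, invmx P *m (Om w - D *m S w - q))])
   <= - ereal_inf ((fun so : 'cV[R]_d * 'cV[R]_p =>
          logMGF_conj Pr S so.1 + logMGF_conj Pr Om (D *m so.1 + P *m so.2 + q))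
        @` Rset))%E.
Proof.
move=> rvS rvOm _ _ _ indepSOm unitP convexR compactR.
pose O w := invmx P *m (Om w - D *m S w - q).
have OmE w : D *m S w + P *m O w + q = Om w.
  by rewrite mulmxA mulmxV // mul1mx -addrA subrK addrC subrK.
have mO : coordwise_measurable O.
  apply/coordwise_measurable_mulmx/coordwise_measurableB/coordwise_measurable_cst.
  apply: coordwise_measurableB; last apply: coordwise_measurable_mulmx;
    exact: random_vector_coordwise.
have mE : measurable [set w | Rset (S w, O w)].
  exact: measurable_compact_preimage (random_vector_coordwise rvS) mO _ compactR.
apply: lee_oppe_ltP => c c_lt.
have [[x0 Rx0]|R0] := pselect (Rset !=set0); last first.
  suff -> : [set w | Rset (S w, O w)] = set0 by rewrite measure0 le0_lneNy // leNye.
  by apply/seteqP; split => w // Rw; apply: R0; exists (S w, O w).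
have cover x : Rset x -> exists2 th,
    mgf_bounded Pr S th.1 /\ mgf_bounded Pr Om th.2 & c < tilt_pair D P q th x.
  move=> Rx; have := lt_le_trans c_lt (ereal_inf_lbound (ex_intro2 _ _ x Rx erefl)).
  by move=> /lt_logMGF_conjD[th [bS bOm c_lt_tilt]]; exists th.
have [F [lam [lam_ge0 F_bounded lam_sum1 c_le]]] :=
  affine_cover_convex_combination convexR (@tilt_pair_segment _ _ _ D P q)
    (@continuous_tilt_pair _ _ _ D P q) compactR (ex_intro _ x0 Rx0) cover.
apply: lne_le_expR => //.
apply: (chernoff_mixture rvS rvOm indepSOm mE lam_ge0 lam_sum1 F_bounded) => w Rw.
by under eq_bigr do rewrite -OmE; exact: (c_le (S w, O w) Rw).
Qed.
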